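(* Let $\mathbb{F}$ be a field and $\mathcal{C} \subseteq \mathbb{F}^{m \times n}$ a linear code with $\dim(\mathcal{C}) = mk$ for a positive integer $k$. The following are equivalent: (1) there exists a subspace $\mathcal{L} \subseteq \mathbb{F}^n$ with $\mathcal{C} = \mathcal{V}_\mathcal{L}$; (2) $d_{M,km}(\mathcal{C}) = k$; (3) $d_{M,r}(\mathcal{C}) = \lceil r/m \rceil$ for all $1 \leq r \leq mk$.
   Context: ${\rm Row}(V)$ is the row space. For a subspace $\mathcal{L} \subseteq \mathbb{F}^n$, $\mathcal{V}_\mathcal{L} = \{V \in \mathbb{F}^{m\times n} \mid {\rm Row}(V) \subseteq \mathcal{L}\}$, and $d_{M,r}(\mathcal{C}) = \min\{\dim \mathcal{L} \mid \mathcal{L} \subseteq \mathbb{F}^n \text{ subspace}, \dim(\mathcal{C} \cap \mathcal{V}_\mathcal{L}) \ge r\}$. *)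

From mathcomp Require Import all_boot all_order all_algebra.
Set Implicit Arguments. Unset Strict Implicit. Unset Printing Implicit Defensive.
Import GRing.Theory.
Local Open Scope ring_scope.

(* V_L = { V in F^{m x n} | Row(V) <= L }, as a subspace of 'M[F]_(m,n):
   the intersection over the rows i of the preimages of L under V |-> row i V. *)
Definition VL (F : fieldType) (m n : nat) (L : {vspace 'rV[F]_n}) : {vspace 'M[F]_(m, n)} :=
  (\bigcap_(i < m) (linfun (fun V : 'M[F]_(m, n) => row i V) @^-1: L))%VS.

Lemma memVL (F : fieldType) (m n : nat) (L : {vspace 'rV[F]_n}) (V : 'M[F]_(m, n)) :
  (V \in VL m L) = [forall i : 'I_m, row i V \in L].
Proof.
rewrite /VL memvE; apply/subv_bigcapP/forallP => H i.
- by have := H i isT; rewrite -memvE -memv_preim lfunE.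
- by move=> _; rewrite -memvE -memv_preim lfunE; exact: H.
Qed.

(* is_dMr C r d  <->  d = d_{M,r}(C) = min { dim L | dim (C :&: V_L) >= r }. *)
Definition dMr_cand (F : fieldType) (m n : nat) (C : {vspace 'M[F]_(m, n)}) (r d : nat) : Prop :=
  exists L : {vspace 'rV[F]_n}, \dim L = d /\ (r <= \dim (C :&: VL m L))%N.

Definition is_dMr (F : fieldType) (m n : nat) (C : {vspace 'M[F]_(m, n)}) (r d : nat) : Prop :=
  dMr_cand C r d /\ forall d', dMr_cand C r d' -> (d <= d')%N.

From mathcomp Require Import all_boot all_order all_algebra.
From mathcomp Require Import zify.
Set Implicit Arguments. Unset Strict Implicit. Unset Printing Implicit Defensive.
Import GRing.Theory.

(* Every V in V_L is X B for a unique X in F^(m x dim L), where the rows of B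
   form a basis of L, so dim V_L = m dim L; since V_L' <= V_L for L' <= L, the
   spaces V_L' with L' <= L of dimension ceil(r/m) show d_{M,r}(V_L) = ceil(r/m).
   Conversely d_{M,mk}(C) = k yields an L of dimension k with C <= V_L, and
   equality of dimensions forces C = V_L. *)

Lemma leq_ceil_divLR m r d : (0 < m)%N -> ((r + m - 1) %/ m <= d)%N = (r <= d * m)%N.
Proof. by move=> m_gt0; rewrite -ltnS ltn_divLR //; lia. Qed.

Section RowSpaceCodes.
Local Open Scope ring_scope.
Variables (F : fieldType) (m n : nat).
Implicit Types (L : {vspace 'rV[F]_n}) (C : {vspace 'M[F]_(m, n)}).

Lemma dim_VL L : \dim (VL m L) = (m * \dim L)%N.
Proof.
set b := vbasis L; have bL : basis_of L b := vbasisP L.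
pose B : 'M[F]_(\dim L, n) := \matrix_j b`_j.
pose g : 'Hom('M[F]_(m, \dim L), 'M[F]_(m, n)) := linfun (mulmxr B).
have gE X : g X = X *m B by rewrite lfunE.
have row_g X i : row i (g X) = \sum_j X i j *: b`_j.
  by rewrite gE row_mul mulmx_sum_row; apply: eq_bigr => j _; rewrite rowK mxE.
have g_inj : injective g.
  move=> X Y /eqP; rewrite -subr_eq0 -linearB /= => /eqP gXY0.
  apply/matrixP => i j; apply/eqP; rewrite -subr_eq0; apply/eqP.
  have /freeP/(_ (fun j => (X - Y) i j)) := basis_free bL.
  by rewrite -row_g gXY0 row0 => /(_ erefl j); rewrite !mxE.
have -> : VL m L = (g @: fullv)%VS.
  apply/vspaceP => V; rewrite memVL; apply/forallP/memv_imgP => [VL_V | [X _ ->] i].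
  - exists (\matrix_(i, j) coord b j (row i V)); first exact: memvf.
    apply/row_matrixP => i; rewrite row_g.
    have : row i V \in <<b>>%VS by rewrite (span_basis bL).
    by move/coord_span => {1}->; apply: eq_bigr => j _; rewrite mxE.
  - rewrite row_g; apply: memv_suml => j _; apply/memvZ/vbasis_mem.
    by rewrite mem_nth ?size_tuple.
rewrite limg_dim_eq ?dimvf ?dim_matrix // capfv.
exact/eqP/lker0P.
Qed.

Lemma VL_subv L1 L2 : (L1 <= L2)%VS -> (VL m L1 <= VL m L2)%VS.
Proof.
move=> sL12; apply/subvP => V; rewrite !memVL => /forallP L1V.
by apply/forallP => i; apply: (subvP sL12).
Qed.

Lemma exists_subv_dim L d :
  (d <= \dim L)%N -> exists2 L' : {vspace 'rV[F]_n}, (L' <= L)%VS & \dim L' = d.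
Proof.
move=> d_le; set b := vbasis L; exists <<take d b>>%VS.
  by apply/span_subvP => v /mem_take; apply: vbasis_mem.
have /eqP-> : free (take d b).
  by apply: (@catl_free _ _ (drop d b)); rewrite cat_take_drop; apply: basis_free (vbasisP L).
by rewrite size_take size_tuple; case: ltngtP d_le.
Qed.

Lemma dMr_cand_le C r d : dMr_cand C r d -> (r <= m * d)%N.
Proof.
case=> L [<- r_le]; apply: (leq_trans r_le).
by rewrite -dim_VL; apply/dimvS/capvSr.
Qed.

Lemma is_dMr_VL L r :
  (0 < m)%N -> (r <= m * \dim L)%N -> is_dMr (VL m L) r ((r + m - 1) %/ m).
Proof.
move=> m_gt0 r_le; split => [|d' /dMr_cand_le]; last by rewrite leq_ceil_divLR // mulnC.
have [|L' sL'L dimL'] := @exists_subv_dim L ((r + m - 1) %/ m).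
  by rewrite leq_ceil_divLR // mulnC.
exists L'; split=> //; rewrite (capv_idPr (VL_subv sL'L)) dim_VL dimL' mulnC.
by rewrite -leq_ceil_divLR.
Qed.

Lemma VL_eq_of_dim C L :
  (\dim C <= \dim (C :&: VL m L))%N -> (m * \dim L <= \dim C)%N -> C = VL m L.
Proof.
move=> dimC_le dimVL_le.
have /eqP capC : (C :&: VL m L == C)%VS by rewrite eqEdim capvSl.
by apply/eqP; rewrite eqEdim -{1}capC capvSr dim_VL.
Qed.

End RowSpaceCodes.

Theorem proposition16 (F : fieldType) (m n : nat) (C : {vspace 'M[F]_(m, n)}) (k : nat) :
  (0 < m)%N -> (0 < k)%N -> \dim C = (m * k)%N ->
  ((exists L : {vspace 'rV[F]_n}, C = VL m L) <-> is_dMr C (k * m) k) /\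
  (is_dMr C (k * m) k <->
   (forall r : nat, (1 <= r <= m * k)%N -> is_dMr C r ((r + m - 1) %/ m)%N)).
Proof.
move=> m_gt0 k_gt0 dimC.
have ceil_mk : ((m * k + m - 1) %/ m = k)%N.
  by rewrite -addnBA // mulnC divnMDl // divn_small ?addn0 //; lia.
have VL_dMr : (exists L, C = VL m L) ->
    forall r, (r <= m * k)%N -> is_dMr C r ((r + m - 1) %/ m).
  case=> L eqC r r_le; rewrite eqC; apply: is_dMr_VL => //.
  have : (m * \dim L == m * k)%N by rewrite -dim_VL -eqC dimC.
  by rewrite eqn_pmul2l // => /eqP->.
have dMr_VL : is_dMr C (k * m) k -> exists L, C = VL m L.
  case=> -[L [dimL dimC_le]] _; exists L.
  by apply: VL_eq_of_dim; rewrite dimC ?dimL // mulnC.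
split; split.
- by move/VL_dMr/(_ (m * k) (leqnn _)); rewrite ceil_mk mulnC.
- exact: dMr_VL.
- by move/dMr_VL/VL_dMr => dMr r /andP[_ /dMr].
- by move/(_ (m * k)); rewrite ceil_mk mulnC; apply; rewrite leqnn muln_gt0 m_gt0 k_gt0.
Qed.
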